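(* Let $\mathcal{X} \subseteq \mathbb{R}^m$ be countable with ground metric $d$, and let $\widehat\nu = \sum_{j=1}^N \widehat\nu_j \delta_{\widehat x_j}$ be a probability mass function supported on $N$ distinct points $\widehat x_1,\dots,\widehat x_N \in \mathcal{X}$ with $\widehat\nu_j > 0$ and $\sum_j \widehat\nu_j = 1$. For $\varepsilon \ge 0$ let $\mathbb{B}_{\mathbb{W}}(\widehat\nu,\varepsilon) = \{\nu \in \mathcal{M}(\mathcal{X}) : \mathbb{W}(\nu,\widehat\nu) \le \varepsilon\}$. Then for any $\varepsilon \ge 0$ and $x \in \mathcal{X}$, $$\sup_{\nu \in \mathbb{B}_{\mathbb{W}}(\widehat\nu,\varepsilon)} \nu(x) = \max\Big\{ \sum_{j=1}^N T_j : T \in \mathbb{R}^N_+,\ \sum_{j=1}^N d(x,\widehat x_j)\, T_j \le \varepsilon,\ T_j \le \widehat\nu_j \ \forall j \in [N] \Big\}.$$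
   Context: $\mathcal{M}(\mathcal{X})$ is the set of probability mass functions supported on $\mathcal{X}$; $[N] = \{1,\dots,N\}$. The type-1 Wasserstein distance is $\mathbb{W}(\nu_1,\nu_2) = \inf_{\lambda \in \Lambda(\nu_1,\nu_2)} \mathbb{E}_\lambda[d(x_1,x_2)]$, where $\Lambda(\nu_1,\nu_2)$ is the set of couplings on $\mathcal{X}\times\mathcal{X}$ with marginals $\nu_1,\nu_2$. *)

From HB Require Import structures.
From mathcomp Require Import all_boot all_order all_algebra.
From mathcomp Require Import all_classical all_reals all_analysis.
Set Implicit Arguments. Unset Strict Implicit. Unset Printing Implicit Defensive.
Import Order.TTheory GRing.Theory Num.Theory.
Local Open Scope classical_set_scope.
Local Open Scope ring_scope.

Definition is_metric_on (R : realType) (T : choiceType) (X : set T) (d : T -> T -> R) :=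
  (forall x y, X x -> X y -> 0 <= d x y) /\
  (forall x y, X x -> X y -> (d x y = 0 <-> x = y)) /\
  (forall x y, X x -> X y -> d x y = d y x) /\
  (forall x y z, X x -> X y -> X z -> d x z <= d x y + d y z).

Definition is_pmf (R : realType) (T : choiceType) (X : set T) (nu : T -> R) :=
  (forall y, 0 <= nu y) /\ (forall y, ~ X y -> nu y = 0) /\
  (\esum_(y in X) (nu y)%:E = 1%E).

Definition is_coupling (R : realType) (T : choiceType) (X : set T)
    (nu1 nu2 : T -> R) (lam : T * T -> R) :=
  (forall p, 0 <= lam p) /\ (forall p, ~ (X `*` X) p -> lam p = 0) /\
  (forall x, X x -> \esum_(y in X) (lam (x, y))%:E = (nu1 x)%:E) /\
  (forall y, X y -> \esum_(x in X) (lam (x, y))%:E = (nu2 y)%:E).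

Definition wasserstein (R : realType) (T : choiceType) (X : set T) (d : T -> T -> R)
    (nu1 nu2 : T -> R) : \bar R :=
  ereal_inf [set \esum_(p in X `*` X) (d p.1 p.2 * lam p)%:E
            | lam in [set lam | is_coupling X nu1 nu2 lam]].

Definition discrete_pmf (R : realType) (T : choiceType) (N : nat)
    (xhat : 'I_N -> T) (nuhat : 'I_N -> R) : T -> R :=
  fun y => \sum_(j < N | xhat j == y) nuhat j.

Definition wball (R : realType) (T : choiceType) (X : set T) (d : T -> T -> R)
    (nuh : T -> R) (eps : R) : set (T -> R) :=
  [set nu | is_pmf X nu /\ (wasserstein X d nu nuh <= eps%:E)%E].

Definition lp_feasible (R : realType) (T : choiceType) (N : nat) (d : T -> T -> R)
    (x : T) (xhat : 'I_N -> T) (nuhat : 'I_N -> R) (eps : R) (t : 'I_N -> R) :=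
  (forall j, 0 <= t j) /\ (\sum_(j < N) d x (xhat j) * t j <= eps) /\
  (forall j, t j <= nuhat j).

(* The supremum is a fractional knapsack problem.  A coupling lam of nu with
   nuhat of cost below eps + dl moves the masses T_j := lam (x, xhat_j) <= nuhat_j
   from xhat_j to x at cost at least sum_j d(x, xhat_j) T_j, and nu(x) <= sum_j T_j.
   Conversely, moving a mass t_j <= nuhat_j from each xhat_j to x yields a measure
   in the ball with nu(x) >= sum_j t_j.  The knapsack attains its maximum at the
   greedy solution, which fills the cheapest atoms first up to a threshold cost c
   and is optimal by weak duality with multiplier 1/c.  Since the infimum defining
   W need not be attained, one also needs that the knapsack value is
   right-continuous in the budget. *)

From HB Require Import structures.
From mathcomp Require Import all_boot all_order all_algebra.
From mathcomp Require Import all_classical all_reals all_analysis.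
From mathcomp Require Import ring.
Set Implicit Arguments. Unset Strict Implicit. Unset Printing Implicit Defensive.
Import Order.TTheory GRing.Theory Num.Theory.
Local Open Scope classical_set_scope.
Local Open Scope ring_scope.

Section Diracs.
Variables (R : realType) (T : choiceType).

Definition diracs (I : finType) (w : I -> R) (a : I -> T) : T -> R :=
  fun y => \sum_i w i * (y == a i)%:R.

Lemma esum_dirac (S : set T) (a : T) (c : R) : S a -> 0 <= c ->
  \esum_(y in S) (c * (y == a)%:R)%:E = c%:E.
Proof.
move=> Sa c0.
rewrite (esumID [set a]); last by move=> y _; rewrite lee_fin mulr_ge0.
have -> : S `&` [set a] = [set a] by apply/seteqP; split=> y /= => [[]//|->].
rewrite esum_set1 ?lee_fin ?eqxx ?mulr1 // esum1 ?adde0 //.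
by move=> y [_ /= /eqP/negPf ->]; rewrite mulr0.
Qed.

Lemma le_esum_point (S : set T) (f : T -> R) (a : T) : S a ->
  (forall y, S y -> 0 <= f y) -> ((f a)%:E <= \esum_(y in S) (f y)%:E)%E.
Proof.
move=> Sa f0; rewrite -(esum_dirac Sa (f0 _ Sa)); apply: le_esum => y Sy.
by rewrite lee_fin; have [->|_] := eqVneq y a; rewrite ?mulr1 ?mulr0 ?f0.
Qed.

Variables (I : finType) (w : I -> R) (a : I -> T).

Lemma diracs_ge0 y : (forall i, 0 <= w i) -> 0 <= diracs w a y.
Proof. by move=> w0; apply: sumr_ge0 => i _; rewrite mulr_ge0. Qed.

Lemma diracs_eq0 y : (forall i, y != a i) -> diracs w a y = 0.
Proof. by move=> ya; apply: big1 => i _; rewrite (negPf (ya i)) mulr0. Qed.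

Lemma esum_diracs (S : set T) : (forall i, S (a i)) -> (forall i, 0 <= w i) ->
  \esum_(y in S) (diracs w a y)%:E = (\sum_i w i)%:E.
Proof.
move=> Sa w0; under eq_esum do rewrite /diracs -sumEFin.
rewrite esum_sum; last by move=> y i _ _; rewrite lee_fin mulr_ge0.
by rewrite -sumEFin; apply: eq_bigr => i _; apply: esum_dirac.
Qed.

End Diracs.

Section InjectiveAtoms.
Variables (R : realType) (T : choiceType) (I : finType) (a : I -> T).
Hypothesis a_inj : injective a.

Lemma diracs_inj (f : T -> R) y :
  diracs (fun i => f (a i)) a y = f y * (y \in codom a)%:R.
Proof.
case: codomP => [[k ->]|ya]; last first.
  by rewrite mulr0 diracs_eq0 // => i; apply/eqP => yai; apply: ya; exists i.
rewrite mulr1 /diracs (bigD1 k) //= eqxx mulr1 big1 ?addr0 // => i ik.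
by rewrite (inj_eq a_inj) eq_sym (negPf ik) mulr0.
Qed.

Variables (S : set T) (f : T -> R).
Hypotheses (Sa : forall i, S (a i)) (f0 : forall y, S y -> 0 <= f y).

Lemma sum_le_esum_inj : ((\sum_i f (a i))%:E <= \esum_(y in S) (f y)%:E)%E.
Proof.
rewrite -(esum_diracs Sa) => [|i]; last exact: f0 _ (Sa i).
apply: le_esum => y Sy; rewrite lee_fin diracs_inj.
by case: (_ \in _); rewrite ?mulr1 ?mulr0 ?f0.
Qed.

Lemma esum_eq_sum_inj : (forall y, S y -> y \notin codom a -> f y = 0) ->
  \esum_(y in S) (f y)%:E = (\sum_i f (a i))%:E.
Proof.
move=> fa; rewrite -(esum_diracs Sa) => [|i]; last exact: f0 _ (Sa i).
apply: eq_esum => y Sy; rewrite diracs_inj.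
by case: (boolP (_ \in _)) => [_|/(fa _ Sy) ->]; rewrite ?mulr1 ?mulr0.
Qed.

End InjectiveAtoms.

Section Couplings.
Variables (R : realType) (T : choiceType) (X : set T).

Lemma coupling_le_marginal2 (nu1 nu2 : T -> R) lam y z :
  is_coupling X nu1 nu2 lam -> X y -> X z -> lam (y, z) <= nu2 z.
Proof.
move=> [lam0 [_ [_ m2]]] Xy Xz; rewrite -lee_fin -m2 //.
exact: (le_esum_point (f := fun y => lam (y, z))).
Qed.

Variables (I : finType) (w : I -> R) (a b : I -> T).
Hypotheses (w0 : forall i, 0 <= w i) (Xa : forall i, X (a i)) (Xb : forall i, X (b i)).

Lemma diracs_pmf : \sum_i w i = 1 -> is_pmf X (diracs w a).
Proof.
move=> w1; split=> [y|]; first exact: diracs_ge0.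
split=> [y Xy|]; last by rewrite esum_diracs // w1.
by apply: diracs_eq0 => i; apply: contra_notN Xy => /eqP ->.
Qed.

Let ab i := (a i, b i).

Lemma diracs_coupling : is_coupling X (diracs w a) (diracs w b) (diracs w ab).
Proof.
split=> [p|]; first exact: diracs_ge0.
split=> [p Xp|].
  apply: diracs_eq0 => i; apply: contra_notN Xp => /eqP ->.
  exact: conj (Xa i) (Xb i).
have w_pair y z : diracs w ab (y, z) = diracs (fun i => w i * (y == a i)%:R) b z.
  by apply: eq_bigr => i _; rewrite xpair_eqE -mulnb natrM mulrA.
have w_pair' y z : diracs w ab (y, z) = diracs (fun i => w i * (z == b i)%:R) a y.
  by apply: eq_bigr => i _; rewrite xpair_eqE andbC -mulnb natrM mulrA.
split=> [y Xy|z Xz].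
  by under eq_esum do rewrite w_pair; rewrite esum_diracs // => i; rewrite mulr_ge0 ?w0.
by under eq_esum do rewrite w_pair'; rewrite esum_diracs // => i; rewrite mulr_ge0 ?w0.
Qed.

Lemma wasserstein_diracs_le (d : T -> T -> R) :
  (forall y z, X y -> X z -> 0 <= d y z) ->
  (wasserstein X d (diracs w a) (diracs w b) <= (\sum_i w i * d (a i) (b i))%:E)%E.
Proof.
move=> d0; apply: ereal_inf_lbound; exists (diracs w ab); first exact: diracs_coupling.
rewrite -(@esum_diracs _ _ _ _ ab (X `*` X)); last 2 first.
- by move=> i; exact: conj (Xa i) (Xb i).
- by move=> i; exact: mulr_ge0 (w0 i) (d0 _ _ (Xa i) (Xb i)).
apply: eq_esum => p _; congr EFin; rewrite /diracs mulr_sumr.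
apply: eq_bigr => i _; have [->|_] := eqVneq p (ab i); last by rewrite !mulr0.
by rewrite !mulr1 mulrC.
Qed.

End Couplings.

Section Knapsack.
Variables (R : realType) (N : nat) (D nu : 'I_N -> R).
Hypotheses (D0 : forall j, 0 <= D j) (nu0 : forall j, 0 <= nu j).

Definition knapsack_feasible (eps : R) (t : 'I_N -> R) :=
  (forall j, 0 <= t j) /\ (\sum_j D j * t j <= eps) /\ (forall j, t j <= nu j).

Definition knapsack_optimal (eps : R) (ts : 'I_N -> R) :=
  knapsack_feasible eps ts /\
  forall t, knapsack_feasible eps t -> \sum_j t j <= \sum_j ts j.

Lemma knapsack_optimal_full eps :
  \sum_j D j * nu j <= eps -> knapsack_optimal eps nu.
Proof.
by move=> Dnu; split=> [|t [_ [_ tnu]]]; [split | apply: ler_sum => j _].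
Qed.

Definition cost_below (c : R) := \sum_(j | D j < c) D j * nu j.
Definition cost_upto (c : R) := \sum_(j | D j <= c) D j * nu j.

Lemma cost_uptoE c :
  cost_upto c = cost_below c + \sum_(j | D j == c) D j * nu j.
Proof.
rewrite /cost_upto /cost_below [LHS]big_mkcond [X in X + _]big_mkcond.
rewrite [X in _ + X]big_mkcond -big_split; apply: eq_bigr => j _ /=.
by rewrite le_eqVlt; case: ltgtP; rewrite ?addr0 ?add0r.
Qed.

Lemma knapsack_threshold eps : 0 <= eps -> eps < \sum_j D j * nu j ->
  exists2 c, 0 < c & cost_below c <= eps < cost_upto c.
Proof.
move=> eps0 eps_lt.
have [j0 _] : exists j : 'I_N, true.
  case: (pickP (fun _ : 'I_N => true)) => [j _|none]; first by exists j.
  by move: eps_lt; rewrite big_pred0 // => /(le_lt_trans eps0); rewrite ltxx.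
have [jM jMmax] : exists jM, forall j, D j <= D jM.
  by exists [arg max_(j > j0) D j]%O; case: arg_maxP => // i _ imax j; apply: imax.
have eps_jM : eps < cost_upto (D jM).
  by rewrite /cost_upto (eq_bigl xpredT) // => j; rewrite jMmax.
(* c is the least atom cost whose cumulative cost exceeds eps. *)
have [k [eps_k kmin]] : exists k, eps < cost_upto (D k) /\
    forall j, eps < cost_upto (D j) -> D k <= D j.
  by exists [arg min_(k < jM | eps < cost_upto (D k)) D k]%O; case: arg_minP.
exists (D k).
  rewrite lt_def D0 andbT; apply: contraTneq eps_k => Dk0.
  rewrite -leNgt /cost_upto big1 // => j; rewrite Dk0 => Dj.
  have -> : D j = 0 by apply/le_anti; rewrite Dj D0.
  by rewrite mul0r.
rewrite eps_k andbT.
case: (pickP [pred j | D j < D k]) => [j1 j1k|none]; last first.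
  by rewrite /cost_below big_pred0.
have [i [ik imax]] : exists i, D i < D k /\ forall j, D j < D k -> D j <= D i.
  by exists [arg max_(i > j1 | D i < D k) D i]%O; case: arg_maxP.
have -> : cost_below (D k) = cost_upto (D i).
  apply: eq_bigl => j; apply/idP/idP => [/imax //|Dji].
  exact: le_lt_trans Dji ik.
by rewrite leNgt; apply: contraTN ik => /kmin; rewrite leNgt.
Qed.

Section Greedy.
Variables (c eps : R).
Hypotheses (below_eps : cost_below c <= eps) (eps_upto : eps < cost_upto c).

Let theta := (eps - cost_below c) / (cost_upto c - cost_below c).

Definition knapsack_greedy j :=
  if D j < c then nu j else if D j == c then theta * nu j else 0.

Lemma knapsack_greedy_cost : \sum_j D j * knapsack_greedy j = eps.
Proof.
have -> : \sum_j D j * knapsack_greedy j =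
    cost_below c + theta * \sum_(j | D j == c) D j * nu j.
  rewrite /cost_below mulr_sumr [X in X + _]big_mkcond [X in _ + X]big_mkcond.
  rewrite -big_split; apply: eq_bigr => j _ /=.
  rewrite /knapsack_greedy; case: ltgtP => _; rewrite ?mulr0 ?addr0 ?add0r //.
  by rewrite mulrCA.
have gap : cost_upto c - cost_below c = \sum_(j | D j == c) D j * nu j.
  by rewrite cost_uptoE addrAC subrr add0r.
rewrite /theta gap; field.
by rewrite -gap subr_eq0 gt_eqF // (le_lt_trans below_eps).
Qed.

Lemma knapsack_greedy_feasible : knapsack_feasible eps knapsack_greedy.
Proof.
have gap : 0 < cost_upto c - cost_below c by rewrite subr_gt0 (le_lt_trans below_eps).
have theta0 : 0 <= theta by rewrite /theta; apply: divr_ge0; [rewrite subr_ge0|exact: ltW].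
have theta1 : theta <= 1 by rewrite /theta ler_pdivrMr // mul1r lerD2r ltW.
split=> [j|].
  rewrite /knapsack_greedy; case: ifP => _; first exact: nu0.
  by case: ifP => _; [exact: mulr_ge0 theta0 (nu0 j)|].
split=> [|j]; first by rewrite knapsack_greedy_cost.
rewrite /knapsack_greedy; case: ifP => _ //; case: ifP => _; last exact: nu0.
exact: ler_piMl (nu0 j) theta1.
Qed.

End Greedy.

Lemma knapsack_optimal_threshold c eps ts : 0 < c ->
  knapsack_feasible eps ts -> \sum_j D j * ts j = eps ->
  (forall j, D j < c -> ts j = nu j) -> (forall j, c < D j -> ts j = 0) ->
  knapsack_optimal eps ts.
Proof.
move=> c0 fts ts_cost ts_below ts_above; split=> // t [t0 [t_cost tnu]].
(* Weak duality: price the budget constraint at 1/c. *)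
have c_neq0 : c != 0 by rewrite gt_eqF.
have split_sum s : \sum_j s j = \sum_j s j * (1 - D j / c) + (\sum_j D j * s j) / c.
  by rewrite mulr_suml -big_split; apply: eq_bigr => j _ /=; field.
rewrite (split_sum t) (split_sum ts) ts_cost.
apply: lerD; last by rewrite ler_pM2r ?invr_gt0.
apply: ler_sum => j _; case: (ltgtP (D j) c) => Dj.
- rewrite ts_below //; apply: ler_wpM2r; last exact: tnu.
  by rewrite subr_ge0 ler_pdivrMr // mul1r ltW.
- rewrite ts_above // mul0r; apply: mulr_ge0_le0; first exact: t0.
  by rewrite subr_le0 ler_pdivlMr // mul1r ltW.
- by rewrite Dj divff // subrr !mulr0.
Qed.

Lemma knapsack_optimal_exists eps : 0 <= eps -> exists ts, knapsack_optimal eps ts.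
Proof.
move=> eps0; have [|eps_lt] := leP (\sum_j D j * nu j) eps.
  by exists nu; apply: knapsack_optimal_full.
have [c c0 /andP[below_eps eps_upto]] := knapsack_threshold eps0 eps_lt.
exists (knapsack_greedy c eps); apply: (knapsack_optimal_threshold c0).
- exact: knapsack_greedy_feasible.
- exact: knapsack_greedy_cost.
- by move=> j Dj; rewrite /knapsack_greedy Dj.
- by move=> j Dj; rewrite /knapsack_greedy ltNge (ltW Dj) gt_eqF.
Qed.

(* Scaling t by eps / (eps + dl) off the cost-free atoms makes it feasible for
   eps and loses at most dl / D j on atom j; cost-free atoms lose nothing, matching
   0^-1 = 0 in the bound. *)
Lemma knapsack_relax eps dl ts t : 0 <= eps -> 0 < dl ->
  knapsack_optimal eps ts -> knapsack_feasible (eps + dl) t ->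
  \sum_j t j <= \sum_j ts j + dl * \sum_j (D j)^-1.
Proof.
move=> eps0 dl0 [_ ts_opt] [t0 [t_cost tnu]].
have epsdl0 : 0 < eps + dl by rewrite ltr_wpDl.
have epsdl_neq0 : eps + dl != 0 by rewrite gt_eqF.
pose s := eps / (eps + dl).
have s0 : 0 <= s by rewrite /s; apply: divr_ge0 => //; exact: ltW.
have s1 : s <= 1 by rewrite /s ler_pdivrMr // mul1r lerDl ltW.
pose t' j := if D j == 0 then t j else s * t j.
have ft' : knapsack_feasible eps t'.
  split=> [j|]; first by rewrite /t'; case: ifP => _; [|exact: mulr_ge0 s0 (t0 j)].
  split=> [|j]; last first.
    by rewrite /t'; case: ifP => _ //; exact: le_trans (ler_piMl (t0 j) s1) (tnu j).
  have -> : \sum_j D j * t' j = s * \sum_j D j * t j.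
    rewrite mulr_sumr; apply: eq_bigr => j _; rewrite /t'.
    by case: eqP => [->|_]; rewrite ?mul0r ?mulr0 // mulrCA.
  by rewrite -[eps](divfK epsdl_neq0) -/s ler_wpM2l.
apply: le_trans (lerD (ts_opt _ ft') (lexx _)); rewrite mulr_sumr -big_split /=.
apply: ler_sum => j _; rewrite /t'; have [->|Dj] := eqVneq (D j) 0.
  by rewrite invr0 mulr0 addr0.
have Djt : D j * t j <= eps + dl.
  apply: le_trans t_cost; rewrite (bigD1 j) //= lerDl.
  by apply: sumr_ge0 => i _; rewrite mulr_ge0 ?D0 ?t0.
have Dj0 : 0 < D j by rewrite lt_def Dj D0.
have tjE : t j = s * t j + dl * (t j / (eps + dl)) by rewrite /s; field.
rewrite {1}tjE lerD2l; apply: ler_wpM2l; first exact: ltW.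
by rewrite ler_pdivrMr // mulrC ler_pdivlMr // mulrC.
Qed.

Lemma knapsack_optimal_stable eps ts e : 0 <= eps -> 0 < e ->
  knapsack_optimal eps ts ->
  exists2 dl, 0 < dl & forall t, knapsack_feasible (eps + dl) t ->
    \sum_j t j <= \sum_j ts j + e.
Proof.
move=> eps0 e0 ts_opt; set K := \sum_j (D j)^-1.
have K0 : 0 <= K by apply: sumr_ge0 => j _; rewrite invr_ge0.
have K1 : 0 < K + 1 by rewrite ltr_wpDl.
exists (e / (K + 1)) => [|t ft]; first by rewrite divr_gt0.
apply: le_trans (knapsack_relax eps0 _ ts_opt ft) _; first by rewrite divr_gt0.
by rewrite lerD2l mulrAC ler_pdivrMr // ler_pM2l // lerDl ler01.
Qed.

End Knapsack.

Section WassersteinBall.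
Variables (R : realType) (T : choiceType) (X : set T) (d : T -> T -> R).
Variables (N : nat) (xhat : 'I_N -> T) (nuhat : 'I_N -> R) (x : T).
Hypotheses (d0 : forall y z, X y -> X z -> 0 <= d y z) (xhat_inj : injective xhat).
Hypotheses (Xxhat : forall j, X (xhat j)) (Xx : X x).

Lemma discrete_pmfE : discrete_pmf xhat nuhat = diracs nuhat xhat.
Proof.
apply/funext => y; rewrite /discrete_pmf /diracs big_mkcond; apply: eq_bigr => j _.
by rewrite eq_sym; case: eqP; rewrite ?mulr1 ?mulr0.
Qed.

Lemma discrete_pmf_atom j : discrete_pmf xhat nuhat (xhat j) = nuhat j.
Proof. by rewrite /discrete_pmf (big_pred1 j) // => i; rewrite /= (inj_eq xhat_inj). Qed.

Lemma coupling_mass_le nu lam : is_coupling X nu (discrete_pmf xhat nuhat) lam ->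
  nu x <= \sum_j lam (x, xhat j).
Proof.
move=> lamC; have [lam0 [_ [m1 _]]] := lamC.
rewrite -lee_fin -m1 // (esum_eq_sum_inj xhat_inj (f := fun z => lam (x, z)) Xxhat) //.
move=> z Xz zxhat; apply/le_anti; rewrite lam0 andbT.
rewrite (le_trans (coupling_le_marginal2 lamC Xx Xz)) // discrete_pmfE diracs_eq0 // => j.
by apply: contraNneq zxhat => ->; exact: codom_f.
Qed.

Lemma transport_cost_ge lam : (forall p, 0 <= lam p) ->
  ((\sum_j d x (xhat j) * lam (x, xhat j))%:E
    <= \esum_(p in X `*` X) (d p.1 p.2 * lam p)%:E)%E.
Proof.
move=> lam0.
apply: (@sum_le_esum_inj _ _ _ (fun j => (x, xhat j)) _ _ (fun p => d p.1 p.2 * lam p)).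
- by move=> i j [] /xhat_inj.
- by move=> j; exact: conj Xx (Xxhat j).
- by move=> [y z] [Xy Xz]; exact: mulr_ge0 (d0 Xy Xz) (lam0 _).
Qed.

Lemma wasserstein_lt_knapsack nu r :
  (wasserstein X d nu (discrete_pmf xhat nuhat) < r%:E)%E ->
  exists t, lp_feasible d x xhat nuhat r t /\ nu x <= \sum_j t j.
Proof.
case/ereal_inf_lt => _ [lam lamC <-] cost_lt; have [lam0 _] := lamC.
exists (fun j => lam (x, xhat j)); split; last exact: coupling_mass_le lamC.
split=> [j|]; first exact: lam0.
split=> [|j]; last by rewrite -discrete_pmf_atom (coupling_le_marginal2 lamC).
by rewrite -lee_fin ltW // (le_lt_trans (transport_cost_ge lam0)).
Qed.

Lemma knapsack_in_wball eps ts : (forall y, X y -> d y y = 0) ->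
  \sum_j nuhat j = 1 -> lp_feasible d x xhat nuhat eps ts ->
  exists2 nu, wball X d (discrete_pmf xhat nuhat) eps nu & \sum_j ts j <= nu x.
Proof.
move=> d_diag nuhat1 [ts0 [ts_cost ts_nuhat]].
pose w (i : 'I_N + 'I_N) := match i with inl j => ts j | inr j => nuhat j - ts j end.
pose src (i : 'I_N + 'I_N) := match i with inl _ => x | inr j => xhat j end.
pose dst (i : 'I_N + 'I_N) := match i with inl j | inr j => xhat j end.
have w0 i : 0 <= w i by case: i => j /=; rewrite ?subr_ge0 ?ts0 ?ts_nuhat.
have Xsrc i : X (src i) by case: i => j; [exact: Xx|exact: Xxhat].
have Xdst i : X (dst i) by case: i => j; exact: Xxhat.
have dstE : diracs w dst = discrete_pmf xhat nuhat.
  rewrite discrete_pmfE; apply/funext => y; rewrite /diracs big_sumType /= -big_split.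
  by apply: eq_bigr => j _ /=; rewrite -mulrDl addrC subrK.
exists (diracs w src); last first.
  rewrite /diracs big_sumType /=.
  have -> : \sum_j ts j * (x == x)%:R = \sum_j ts j.
    by apply: eq_bigr => j _; rewrite eqxx mulr1.
  by rewrite lerDl; apply: sumr_ge0 => j _; exact: mulr_ge0 (w0 (inr j)) (ler0n _ _).
split.
  apply: diracs_pmf => //; rewrite big_sumType /= -big_split -[RHS]nuhat1.
  by apply: eq_bigr => j _ /=; rewrite addrC subrK.
rewrite -dstE; apply: le_trans (wasserstein_diracs_le w0 Xsrc Xdst d0) _.
rewrite lee_fin big_sumType /= [Y in _ + Y]big1 ?addr0 => [|j _]; last first.
  by rewrite d_diag ?mulr0 //; exact: Xxhat.
by under eq_bigr do rewrite mulrC.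
Qed.

End WassersteinBall.

Theorem mainTheorem5 (R : realType) (m : nat) (X : set 'rV[R]_m)
  (d : 'rV[R]_m -> 'rV[R]_m -> R) (N : nat)
  (xhat : 'I_N -> 'rV[R]_m) (nuhat : 'I_N -> R) :
  countable X -> is_metric_on X d ->
  injective xhat -> (forall j, X (xhat j)) ->
  (forall j, 0 < nuhat j) -> \sum_(j < N) nuhat j = 1 ->
  forall (eps : R) (x : 'rV[R]_m), 0 <= eps -> X x ->
  exists tstar : 'I_N -> R,
    lp_feasible d x xhat nuhat eps tstar /\
    (forall t, lp_feasible d x xhat nuhat eps t ->
       \sum_(j < N) t j <= \sum_(j < N) tstar j) /\
    ereal_sup [set (nu x)%:E | nu in wball X d (discrete_pmf xhat nuhat) eps]
      = (\sum_(j < N) tstar j)%:E.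
Proof.
move=> _ [d0 [d_eq0 _]] xhat_inj Xxhat nuhat_gt0 nuhat1 eps x eps0 Xx.
have nuhat0 j : 0 <= nuhat j by exact: ltW.
have dx0 j : 0 <= d x (xhat j) by exact: d0.
have [ts ts_opt] := knapsack_optimal_exists dx0 nuhat0 eps0.
exists ts; split; first exact: ts_opt.1.
split; first exact: ts_opt.2.
apply/le_anti/andP; split.
- apply: ge_ereal_sup => _ [nu [_ W] <-]; rewrite lee_fin.
  apply/ler_addgt0Pr => e e0.
  have [dl dl0 stable] := knapsack_optimal_stable dx0 eps0 e0 ts_opt.
  have W' : (wasserstein X d nu (discrete_pmf xhat nuhat) < (eps + dl)%:E)%E.
    by apply: le_lt_trans W _; rewrite lte_fin ltrDl.
  have [t [ft nut]] := wasserstein_lt_knapsack d0 xhat_inj Xxhat Xx W'.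
  exact: le_trans nut (stable t ft).
- have d_diag y : X y -> d y y = 0 by move=> Xy; apply/d_eq0.
  have [nu Bnu ts_nu] := knapsack_in_wball d0 Xxhat Xx d_diag nuhat1 ts_opt.1.
  apply: (@le_trans _ _ (nu x)%:E); first by rewrite lee_fin.
  by apply: ereal_sup_ubound; exists nu.
Qed.
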